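(* Let $G=(V,E)$ be a simple directed acyclic graph with capacities $C\in\mathbb{R}_{\ge0}^E$, $s,t\in V$ with a directed $s$-$t$ path, and budget $\gamma$ with $0<\gamma\le\min_{e\in E}C(e)$. For any interdiction strategy $w$ there exists an interdiction strategy $w'$ which is a probability distribution on the set of single-path flows (in $\mathcal{F}_{\le\gamma}$) such that $\Lambda(w',P)\ge\Lambda(w,P)$ for every set of user paths $P$.
   Context: An $s$-$t$ flow is a vector $\mathbf{f}\in\mathbb{R}^E$ with $0\le\mathbf{f}(e)\le C(e)$ for all $e$ and flow conservation at every $v\in V\setminus\{s,t\}$; its value is $val(\mathbf{f})=\sum_{(s,u)\in E}\mathbf{f}(s,u)$. $\mathcal{F}_{\le\gamma}$ denotes the set of $s$-$t$ flows of value at most $\gamma$. An interdiction strategy is a (finitely supported) probability distribution $w$ on $\mathcal{F}_{\le\gamma}$. A single-path flow is an $s$-$t$ flow whose positive entries all lie on the edges of one directed $s$-$t$ path. A set of user paths is a set $P=\{p_1,\dots,p_k\}$ of directed paths in $G$ (viewed as edge sets, not necessarily disjoint or with common endpoints) with initial flow values $\lambda_i\ge0$ such that $\sum_{i:e\in p_i}\lambda_i\le C(e)$ for all $e$. For an $s$-$t$ flow $\mathbf{f}$, $T(\mathbf{f},P)$ is the optimal value of: maximize $\sum_i\tilde\lambda_i$ s.t. $\sum_{i:e\in p_i}\tilde\lambda_i\le C(e)-\mathbf{f}(e)$ for all $e$, $0\le\tilde\lambda_i\le\lambda_i$. Define $\Lambda(\mathbf{f},P)=\sum_i\lambda_i-T(\mathbf{f},P)$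 and $\Lambda(w,P)=\sum_{\mathbf{f}}w(\mathbf{f})\Lambda(\mathbf{f},P)$. *)

From HB Require Import structures.
From mathcomp Require Import all_boot all_order all_algebra.
From mathcomp Require Import boolp classical_sets reals.
Set Implicit Arguments. Unset Strict Implicit. Unset Printing Implicit Defensive.
Import Order.TTheory GRing.Theory Num.Theory.
Local Open Scope ring_scope.
Local Open Scope classical_set_scope.

Section Defs.
Variables (V : finType) (R : realType).
Variable E : {set V * V}.

Definition erel : rel V := fun u v => (u, v) \in E.

Definition acyclic : Prop :=
  forall (x : V) (p : seq V), path erel x p -> last x p = x -> p = [::].

Definition is_dpath (x : V) (p : seq V) : bool := path erel x p.

Definition is_st_path (s t : V) (x : V) (p : seq V) : bool :=
  [&& x == s, path erel x p & last x p == t].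

Definition path_edges (x : V) (p : seq V) : seq (V * V) := zip (x :: p) p.

Variables (C : V * V -> R) (s t : V).

(* s-t flow: vector on E (values outside E are irrelevant) *)
Definition is_flow (f : V * V -> R) : Prop :=
  (forall e, e \in E -> 0 <= f e <= C e) /\
  (forall v, v != s -> v != t ->
     \sum_(u | (u, v) \in E) f (u, v) = \sum_(w | (v, w) \in E) f (v, w)).

Definition flow_val (f : V * V -> R) : R := \sum_(u | (s, u) \in E) f (s, u).

Definition flow_le (gamma : R) (f : V * V -> R) : Prop :=
  is_flow f /\ flow_val f <= gamma.

Definition single_path_flow (f : V * V -> R) : Prop :=
  is_flow f /\
  exists (x : V) (p : seq V), is_st_path s t x p /\
    forall e, e \in E -> 0 < f e -> e \in path_edges x p.

(* a set of user paths: k paths (x_i :: p_i) with initial flow values lam i *)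
Definition user_paths (k : nat) (P : 'I_k -> V * seq V) (lam : 'I_k -> R) : Prop :=
  (forall i, is_dpath (P i).1 (P i).2) /\
  (forall i, 0 <= lam i) /\
  (forall e, e \in E ->
     \sum_(i < k | e \in path_edges (P i).1 (P i).2) lam i <= C e).

(* T(f, P): optimal value of the residual LP *)
Definition T_val (k : nat) (P : 'I_k -> V * seq V) (lam : 'I_k -> R)
    (f : V * V -> R) : R :=
  sup [set y : R | exists lt : 'I_k -> R,
        (forall i, 0 <= lt i <= lam i) /\
        (forall e, e \in E ->
           \sum_(i < k | e \in path_edges (P i).1 (P i).2) lt i <= C e - f e) /\
        y = \sum_(i < k) lt i].

Definition Lambda_f (k : nat) (P : 'I_k -> V * seq V) (lam : 'I_k -> R)
    (f : V * V -> R) : R :=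
  \sum_(i < k) lam i - T_val P lam f.

(* a finitely supported probability distribution, as a list of (weight, flow) *)
Definition interdiction (gamma : R) (w : seq (R * (V * V -> R))) : Prop :=
  (forall a, a \in w -> 0 <= a.1 /\ flow_le gamma a.2) /\
  \sum_(a <- w) a.1 = 1.

Definition Lambda_w (k : nat) (P : 'I_k -> V * seq V) (lam : 'I_k -> R)
    (w : seq (R * (V * V -> R))) : R :=
  \sum_(a <- w) a.1 * Lambda_f P lam a.2.

End Defs.

From HB Require Import structures.
From mathcomp Require Import all_boot all_order all_algebra.
From mathcomp Require Import boolp classical_sets reals.
Import Order.TTheory GRing.Theory Num.Theory.
Local Open Scope ring_scope.
Set Implicit Arguments. Unset Strict Implicit. Unset Printing Implicit Defensive.

(* Flow decomposition in a DAG writes every f in F_{<=gamma} as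
   sum_j a_j 1_{p_j} over s-t paths p_j with sum_j a_j = val f <= gamma, so f
   is dominated edgewise by the mixture putting weight a_j / gamma on the
   single-path flow gamma 1_{p_j} and the remaining weight on gamma 1_{p_0} for
   a fixed s-t path p_0.  Mixing feasible residual routings gives a feasible
   routing for the mixed flow, so T(., P) is concave and nonincreasing on
   capacity-respecting flows, i.e. Lambda(., P) is convex and nondecreasing;
   hence replacing every flow of w by its dominating mixture does not decrease
   Lambda(w, P). *)

Lemma path_to_pred (T : Type) (r : rel T) (B : pred T) n :
  (forall x p, path r x p -> size p < n)%N ->
  (forall u v, r u v -> ~~ B v -> exists w, r v w) ->
  forall u v, r u v -> exists2 p, path r v p & B (last v p).
Proof.
move=> r_bound r_step.
suff walk m u v : r u v -> exists2 p, path r v p & B (last v p) \/ size p = m.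
  move=> u v ruv; have [p rp [Bp|sz_p]] := walk n u v ruv; first by exists p.
  by have := r_bound _ _ rp; rewrite sz_p ltnn.
elim: m u v => [|m IH] u v ruv; first by exists [::]; last right.
have [Bv|nBv] := boolP (B v); first by exists [::]; last left.
have [w rvw] := r_step _ _ ruv nBv.
have [p rp Bp] := IH _ _ rvw.
by exists (w :: p); rewrite /= ?rvw //; case: Bp => [|->]; [left | right].
Qed.

Lemma uniq_map_inj_in (T1 T2 : eqType) (f : T1 -> T2) (s : seq T1) :
  uniq (map f s) -> {in s &, injective f}.
Proof.
elim: s => //= x s IH /andP[fx_s uniq_fs] y z.
rewrite !inE => /predU1P[->|ys] /predU1P[->|zs] //.
- by move=> fxz; move: fx_s; rewrite fxz map_f.
- by move=> fyx; move: fx_s; rewrite -fyx map_f.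
- exact: IH.
Qed.

Lemma mem_belast_inner (T : eqType) (x v : T) p :
  v != x -> v != last x p -> (v \in belast x p) = (v \in p).
Proof.
move=> vx vlast; have := congr1 (fun q => v \in q) (lastI x p).
by rewrite /= mem_rcons !inE (negbTE vx) (negbTE vlast).
Qed.

Lemma path_edges_rel (V : finType) (r : rel V) x p :
  path r x p -> {in path_edges x p, forall e, r e.1 e.2}.
Proof.
elim: p x => [|y p IH] x //= /andP[rxy rp] e.
by rewrite /path_edges /= inE => /predU1P[->|/IH] //; apply.
Qed.

Section Sums.
Variable R : realType.

Lemma psumr_gt0P (I : finType) (P : pred I) (F : I -> R) :
  (forall i, P i -> 0 <= F i) ->
  reflect (exists i, P i && (0 < F i)) (0 < \sum_(i | P i) F i).
Proof.
move=> F_ge0; rewrite lt_def psumr_neq0 // sumr_ge0 // andbT.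
by apply: (iffP hasP) => [[i _]|[i]]; exists i; rewrite ?mem_index_enum.
Qed.

Lemma sumr_mulrb_unique (I : finType) (P Q : pred I) (a : R) :
  {subset Q <= P} -> {in Q &, forall i j, i = j} ->
  \sum_(i | P i) a *+ Q i = a *+ [exists i, Q i].
Proof.
move=> sQP Q_uniq; case: existsP => [[i0 Qi0]|noQ]; last first.
  by apply: big1 => i _; case Qi: (Q i) => //; case: noQ; exists i.
rewrite (bigD1 i0 (sQP _ Qi0)) Qi0 big1 /= ?addr0 // => j /andP[_ ji0].
by case Qj: (Q j); rewrite // (Q_uniq j i0) ?eqxx in ji0.
Qed.

Lemma ler_wsum (I : eqType) (r : seq I) (w F G : I -> R) :
  (forall i, i \in r -> 0 <= w i) -> (forall i, i \in r -> F i <= G i) ->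
  \sum_(i <- r) w i * F i <= \sum_(i <- r) w i * G i.
Proof.
move=> w_ge0 FG; rewrite !big_seq; apply: ler_sum => i ir.
by rewrite ler_wpM2l ?w_ge0 ?FG.
Qed.

End Sums.

Section AcyclicPaths.
Variables (V : finType) (E : {set V * V}).
Hypothesis acyclicE : acyclic E.

Lemma acyclic_path_uniq x p : path (erel E) x p -> uniq (x :: p).
Proof.
elim: p x => [|y p IH] x //= /andP[exy yp].
have /= -> := IH _ yp; rewrite andbT; apply/negP => x_yp.
have : path (erel E) x (y :: p) by rewrite /= exy.
case/path.splitP: x_yp => p1 p2; rewrite cat_path => /andP[cycle_x _].
by have := acyclicE cycle_x; rewrite last_rcons => /(_ erefl); case: p1 {cycle_x}.
Qed.

Lemma acyclic_path_size x p : path (erel E) x p -> (size p < #|V|)%N.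
Proof.
move=> /acyclic_path_uniq/card_uniqP size_xp.
by have := max_card (mem (x :: p)); rewrite -/(card _) size_xp.
Qed.

End AcyclicPaths.

Section PathFlow.
Variables (V : finType) (R : realType) (E : {set V * V}).
Hypothesis acyclicE : acyclic E.

Definition path_flow (a : R) (x : V) (p : seq V) (e : V * V) : R :=
  a *+ (e \in path_edges x p).

Lemma path_edges_sub x p : path (erel E) x p -> {subset path_edges x p <= E}.
Proof. by move=> xp [u v] /(path_edges_rel xp). Qed.

Lemma path_flow_in a x p v : path (erel E) x p ->
  \sum_(u | (u, v) \in E) path_flow a x p (u, v) = a *+ (v \in p).
Proof.
move=> xp; have /andP[_ uniq_p] := acyclic_path_uniq acyclicE xp.
have edges2 : unzip2 (path_edges x p) = p by rewrite unzip2_zip /= ?leqnSn.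
rewrite sumr_mulrb_unique => [|u /(path_edges_sub xp) //|u u' uv u'v].
  congr (_ *+ nat_of_bool _); apply/existsP/idP => [[u uv]|].
    by rewrite -edges2 (map_f snd uv).
  by rewrite -{1}edges2 => /mapP[[u v'] uv /= ->]; exists u.
rewrite -edges2 in uniq_p.
by case: (uniq_map_inj_in uniq_p uv u'v erefl).
Qed.

Lemma path_flow_out a x p v : path (erel E) x p ->
  \sum_(w | (v, w) \in E) path_flow a x p (v, w) = a *+ (v \in belast x p).
Proof.
move=> xp; have := acyclic_path_uniq acyclicE xp.
rewrite lastI rcons_uniq => /andP[_ uniq_belast].
have edges1 : unzip1 (path_edges x p) = belast x p.
  by elim: p x {xp uniq_belast} => //= y p IH x; rewrite -IH.
rewrite sumr_mulrb_unique => [|w /(path_edges_sub xp) //|w w' vw vw'].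
  congr (_ *+ nat_of_bool _); apply/existsP/idP => [[w vw]|].
    by rewrite -edges1 (map_f fst vw).
  by rewrite -{1}edges1 => /mapP[[v' w] vw /= ->]; exists w.
rewrite -edges1 in uniq_belast.
by case: (uniq_map_inj_in uniq_belast vw vw' erefl).
Qed.

End PathFlow.

Section Decomposition.
Variables (V : finType) (R : realType) (E : {set V * V}) (s t : V).
Hypothesis acyclicE : acyclic E.
Hypothesis st_path : exists (x : V) (p : seq V), is_st_path E s t x p.

Definition conservative (f : V * V -> R) : Prop :=
  forall v, v != s -> v != t ->
    \sum_(u | (u, v) \in E) f (u, v) = \sum_(w | (v, w) \in E) f (v, w).

Definition flow_support (f : V * V -> R) : {set V * V} :=
  [set e in E | 0 < f e].

Lemma acyclic_st_ends x p : path (erel E) x p -> p != [::] ->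
  x \in [:: s; t] -> last x p \in [:: s; t] -> x = s /\ last x p = t.
Proof.
have [_ [p0 /and3P[/eqP-> sp0 /eqP p0t]]] := st_path.
move=> xp p_nil; have no_cycle : last x p != x.
  by apply: contra p_nil => /eqP /(acyclicE xp) ->.
rewrite !inE => /orP[] /eqP x_st /orP[] /eqP last_st //.
- by move: no_cycle; rewrite last_st x_st eqxx.
- have cycle_x : path (erel E) x (p ++ p0) by rewrite cat_path xp last_st.
  have := acyclicE cycle_x; rewrite last_cat last_st p0t x_st => /(_ erefl).
  by case: (p) p_nil.
- by move: no_cycle; rewrite last_st x_st eqxx.
Qed.

Lemma flow_support_in_out (f : V * V -> R) v :
  {in E, forall e, 0 <= f e} -> conservative f -> v != s -> v != t ->
  (exists u, (u, v) \in flow_support f) <-> (exists w, (v, w) \in flow_support f).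
Proof.
move=> f_ge0 f_cons vs vt.
have supp_sum (F : V -> V * V) : (exists u, F u \in flow_support f) <->
    0 < \sum_(u | F u \in E) f (F u).
  split=> [[u Fu]|/psumr_gt0P[u /f_ge0 //|u Fu]]; last by exists u; rewrite inE.
  by apply/psumr_gt0P=> [u' /f_ge0 //|]; exists u; rewrite inE in Fu.
apply: (iff_trans (supp_sum (fun u => (u, v)))); rewrite /= f_cons //.
exact: iff_sym (supp_sum (pair v)).
Qed.

(* Walk forward and backward from a support edge until hitting s or t:
   acyclicity makes both walks terminate and forces them to end at t and s. *)
Lemma support_st_path (f : V * V -> R) e0 :
  {in E, forall e, 0 <= f e} -> conservative f -> e0 \in flow_support f ->
  exists p, [/\ is_st_path E s t s p, p != [::]
              & {subset path_edges s p <= flow_support f}].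
Proof.
move=> f_ge0 f_cons; case: e0 => a b ab.
pose r : rel V := fun u v => (u, v) \in flow_support f.
pose B : pred V := mem [:: s; t].
have r_sub : subrel r (erel E) by move=> u v; rewrite /r inE => /andP[].
have in_out v : ~~ B v -> (exists u, r u v) <-> (exists w, r v w).
  by rewrite /B !inE negb_or => /andP[vs vt]; apply: flow_support_in_out.
have forward u v : r u v -> ~~ B v -> exists w, r v w.
  by move=> uv /in_out [+ _]; apply; exists u.
have backward u v : r v u -> ~~ B v -> exists w, r w v.
  by move=> vu /in_out [_]; apply; exists u.
have bound x p : path r x p -> (size p < #|V|)%N.
  by move/(sub_path r_sub); apply: acyclic_path_size.
have rev_bound x p : path (fun u v => r v u) x p -> (size p < #|V|)%N.
  by rewrite -rev_path => /bound; rewrite size_rev size_belast.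
have [q bq Bq] := path_to_pred bound forward ab.
have [q' aq' Bq'] := path_to_pred rev_bound backward ab.
have last_a : last (last a q') (rev (belast a q')) = a.
  by case: (q') => //= c q''; rewrite rev_cons last_rcons.
set y := last a q' in Bq' last_a.
pose W := rev (belast a q') ++ b :: q.
have W_nil : W != [::] by rewrite /W; case: (rev _).
have yW : path r y W by rewrite cat_path rev_path aq' last_a /= bq andbT.
have last_W : last y W = last b q by rewrite last_cat last_a.
have [|ys Wt] := acyclic_st_ends (sub_path r_sub yW) W_nil Bq'; rewrite ?last_W //.
exists W; split=> //; first by rewrite /is_st_path -ys eqxx (sub_path r_sub yW) Wt eqxx.
by rewrite -ys => e /(path_edges_rel yW); case: e.
Qed.

Lemma peel_st_path (f : V * V -> R) p :
  {in E, forall e, 0 <= f e} -> conservative f ->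
  is_st_path E s t s p -> p != [::] -> {subset path_edges s p <= flow_support f} ->
  exists2 a, 0 < a & let g e := f e - path_flow a s p e in
    [/\ {in E, forall e, 0 <= g e}, conservative g
      & flow_support g \proper flow_support f].
Proof.
move=> f_ge0 f_cons /and3P[_ sp /eqP pt] p_nil p_supp.
have [e1 e1p] : exists e1, e1 \in path_edges s p.
  by case: (p) p_nil => // y q _; exists (s, y); rewrite mem_head.
case: (arg_minP f e1p) => em emp em_min.
have em_pos : 0 < f em by have := p_supp _ emp; rewrite inE => /andP[].
exists (f em) => //; split.
- move=> e eE; rewrite /path_flow mulrb.
  by case: ifP => ep; rewrite ?subr_ge0 ?em_min ?subr0 ?f_ge0.
- move=> v vs vt; rewrite !sumrB path_flow_in ?path_flow_out // f_cons //.
  by rewrite mem_belast_inner ?pt.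
apply/properP; split.
  apply/fintype.subsetP => e; rewrite !inE => /andP[-> g_pos] /=.
  by apply: lt_le_trans g_pos _; rewrite gerBl mulrn_wge0 // ltW.
exists em; rewrite ?p_supp // inE /path_flow (_ : em \in path_edges s p) //.
by rewrite subrr ltxx andbF.
Qed.

Lemma flow_decomposition (f : V * V -> R) :
  {in E, forall e, 0 <= f e} -> conservative f ->
  exists L : seq (R * seq V),
    (forall a, a \in L -> [/\ 0 <= a.1, is_st_path E s t s a.2 & a.2 != [::]]) /\
    {in E, forall e, f e = \sum_(a <- L) path_flow a.1 s a.2 e}.
Proof.
have [n] := ubnP #|flow_support f|; elim: n f => // n IH f supp_f f_ge0 f_cons.
have [supp0|[e0 e0_supp]] := set_0Vmem (flow_support f).
  exists [::]; split=> // e eE; rewrite big_nil.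
  have := f_ge0 e eE; rewrite le_eqVlt => /predU1P[<-//|fe_pos].
  suff : e \in flow_support f by rewrite supp0 inE.
  by rewrite inE eE fe_pos.
have [p [p_st p_nil p_supp]] := support_st_path f_ge0 f_cons e0_supp.
have [a a_pos [g_ge0 g_cons g_supp]] := peel_st_path f_ge0 f_cons p_st p_nil p_supp.
have [|L [L_ok g_eq]] := IH _ _ g_ge0 g_cons.
  exact: leq_trans (proper_card g_supp) supp_f.
exists ((a, p) :: L); split=> [b|e eE].
  by rewrite inE => /predU1P[->|/L_ok //]; split=> //; apply: ltW.
by rewrite big_cons /= -g_eq // addrC subrK.
Qed.

End Decomposition.

Section ResidualLP.
Variables (V : finType) (R : realType) (E : {set V * V}) (C : V * V -> R).
Variables (k : nat) (P : 'I_k -> V * seq V) (lam : 'I_k -> R).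

(* [T_val E C P lam f] is by definition [sup (residual_values f)]. *)
Definition residual_values (f : V * V -> R) : set R :=
  [set y : R | exists lt : 'I_k -> R,
    (forall i, 0 <= lt i <= lam i) /\
    (forall e, e \in E ->
       \sum_(i < k | e \in path_edges (P i).1 (P i).2) lt i <= C e - f e) /\
    y = \sum_(i < k) lt i].

Definition residual_feasible (f : V * V -> R) (lt : 'I_k -> R) : Prop :=
  (forall i, 0 <= lt i <= lam i) /\
  (forall e, e \in E ->
     \sum_(i < k | e \in path_edges (P i).1 (P i).2) lt i <= C e - f e).

Lemma has_sup_residual_values f y0 :
  residual_values f y0 -> has_sup (residual_values f).
Proof.
move=> fy0; split; first by exists y0.
exists (\sum_(i < k) lam i) => _ [lt [lt_lam [_ ->]]].
by apply: ler_sum => i _; case/andP: (lt_lam i).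
Qed.

Lemma T_val_ub f lt : residual_feasible f lt -> \sum_(i < k) lt i <= T_val E C P lam f.
Proof.
move=> [lt_lam lt_cap]; have f_lt : residual_values f (\sum_(i < k) lt i) by exists lt.
exact: sup_upper_bound (has_sup_residual_values f_lt) _ f_lt.
Qed.

Lemma T_val_approx f eps :
  (forall i, 0 <= lam i) -> {in E, forall e, f e <= C e} -> 0 < eps ->
  exists lt, residual_feasible f lt /\ T_val E C P lam f - eps < \sum_(i < k) lt i.
Proof.
move=> lam_ge0 f_le_C eps_pos.
have f_0 : residual_values f 0.
  exists (fun=> 0); split=> [i|]; first by rewrite lexx lam_ge0.
  by split=> [e eE|]; rewrite big1 // subr_ge0 f_le_C.
have [_ [lt [lt_lam [lt_cap ->]]] gap] :=
  sup_adherent eps_pos (has_sup_residual_values f_0).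
by exists lt.
Qed.

Lemma residual_feasible_mix f (M : seq (R * (V * V -> R))) pick :
  (forall b, b \in M -> 0 <= b.1 /\ residual_feasible b.2 (pick b.2)) ->
  \sum_(b <- M) b.1 = 1 ->
  {in E, forall e, f e <= \sum_(b <- M) b.1 * b.2 e} ->
  residual_feasible f (fun i => \sum_(b <- M) b.1 * pick b.2 i).
Proof.
move=> M_ok M_sum1 f_le; have M_ge0 b : b \in M -> 0 <= b.1 by case/M_ok.
split=> [i|e eE].
  apply/andP; split.
    rewrite big_seq sumr_ge0 // => b /M_ok [b1_ge0 [/(_ i) /andP[pick_ge0 _] _]].
    exact: mulr_ge0.
  rewrite -[lam i]mul1r -M_sum1 mulr_suml.
  by apply: ler_wsum => // b /M_ok [_ [/(_ i) /andP[]]].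
rewrite exchange_big /=; under eq_bigr do rewrite -mulr_sumr.
apply: le_trans (_ : \sum_(b <- M) b.1 * (C e - b.2 e) <= _).
  by apply: ler_wsum => // b /M_ok [_ [_ /(_ e eE)]].
rewrite (eq_bigr _ (fun b _ => mulrBr _ _ _)) sumrB -mulr_suml M_sum1 mul1r.
by rewrite lerB ?f_le.
Qed.

Lemma T_val_concave f (M : seq (R * (V * V -> R))) :
  (forall i, 0 <= lam i) ->
  (forall b, b \in M -> 0 <= b.1 /\ {in E, forall e, b.2 e <= C e}) ->
  \sum_(b <- M) b.1 = 1 ->
  {in E, forall e, f e <= \sum_(b <- M) b.1 * b.2 e} ->
  \sum_(b <- M) b.1 * T_val E C P lam b.2 <= T_val E C P lam f.
Proof.
move=> lam_ge0 M_ok M_sum1 f_le; apply/ler_addgt0Pr => eps eps_pos.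
have /choice [pick pickP] : forall g, exists lt, {in E, forall e, g e <= C e} ->
    residual_feasible g lt /\ T_val E C P lam g - eps < \sum_(i < k) lt i.
  move=> g; have [g_le_C|not_g_le_C] := pselect {in E, forall e, g e <= C e}.
    by have [lt lt_ok] := T_val_approx lam_ge0 g_le_C eps_pos; exists lt.
  by exists (fun=> 0).
have {}pickP b : b \in M -> [/\ 0 <= b.1, residual_feasible b.2 (pick b.2)
    & T_val E C P lam b.2 - eps < \sum_(i < k) pick b.2 i].
  by case/M_ok => b1_ge0 /pickP [].
apply: le_trans (_ : \sum_(i < k) \sum_(b <- M) b.1 * pick b.2 i + eps <= _).
  rewrite exchange_big /= -[eps]mul1r -M_sum1 mulr_suml -big_split /=.
  under [X in _ <= X]eq_bigr do rewrite -mulr_sumr -mulrDr.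
  by apply: ler_wsum => [b /pickP []|b /pickP [_ _ gap]] //; rewrite -lerBlDr ltW.
rewrite lerD2r; apply/T_val_ub/residual_feasible_mix => // b /pickP [b1_ge0 b_ok _].
by split.
Qed.

Lemma Lambda_f_convex f (M : seq (R * (V * V -> R))) :
  (forall i, 0 <= lam i) ->
  (forall b, b \in M -> 0 <= b.1 /\ {in E, forall e, b.2 e <= C e}) ->
  \sum_(b <- M) b.1 = 1 ->
  {in E, forall e, f e <= \sum_(b <- M) b.1 * b.2 e} ->
  Lambda_f E C P lam f <= \sum_(b <- M) b.1 * Lambda_f E C P lam b.2.
Proof.
move=> lam_ge0 M_ok M_sum1 f_le; rewrite /Lambda_f.
under [X in _ <= X]eq_bigr do rewrite mulrBr.
by rewrite sumrB -mulr_suml M_sum1 mul1r lerB // T_val_concave.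
Qed.
End ResidualLP.

Section SinglePathMixtures.
Variables (V : finType) (R : realType) (E : {set V * V}) (C : V * V -> R).
Variables (s t : V) (gamma : R).
Hypothesis acyclicE : acyclic E.
Hypothesis C_ge0 : forall e, e \in E -> 0 <= C e.
Hypothesis st_path : exists (x : V) (p : seq V), is_st_path E s t x p.
Hypothesis gamma_gt0 : 0 < gamma.
Hypothesis gamma_le_C : forall e, e \in E -> gamma <= C e.

Lemma path_flow_single p : is_st_path E s t s p ->
  flow_le E C s t gamma (path_flow gamma s p) /\
  single_path_flow E C s t (path_flow gamma s p).
Proof.
move=> p_st; have /and3P[_ sp /eqP pt] := p_st.
have p_flow : is_flow E C s t (path_flow gamma s p).
  split=> [e eE|v vs vt].
    rewrite /path_flow mulrb.
    by case: ifP; rewrite ?lexx ?(ltW gamma_gt0) ?gamma_le_C ?C_ge0.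
  rewrite (path_flow_in acyclicE) ?(path_flow_out acyclicE) //.
  by rewrite mem_belast_inner ?pt.
split; split=> //; last first.
  by exists s, p; split=> // e _; rewrite /path_flow mulrb; case: ifP; rewrite ?ltxx.
by rewrite /flow_val (path_flow_out acyclicE) // mulrb; case: ifP; rewrite ?lexx ?ltW.
Qed.

Definition dominating_single_path_mixture f (M : seq (R * (V * V -> R))) :=
  [/\ forall b, b \in M ->
        [/\ 0 <= b.1, flow_le E C s t gamma b.2 & single_path_flow E C s t b.2],
      \sum_(b <- M) b.1 = 1
    & {in E, forall e, f e <= \sum_(b <- M) b.1 * b.2 e}].

Lemma dominating_single_path_mixture_exists f :
  flow_le E C s t gamma f -> exists M, dominating_single_path_mixture f M.
Proof.
case=> [[f_cap f_cons] f_val].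
have f_ge0 : {in E, forall e, 0 <= f e} by move=> e /f_cap /andP[].
have [L [L_ok f_eq]] := flow_decomposition acyclicE st_path f_ge0 f_cons.
have [x0 [p0 p0_st]] := st_path; have /and3P[/eqP x0s _ _] := p0_st; subst x0.
have val_f : flow_val E s f = \sum_(a <- L) a.1.
  rewrite /flow_val (eq_bigr _ (fun u su => f_eq (s, u) su)) exchange_big /=.
  apply: eq_big_seq => a /L_ok [_ /and3P[_ sp _] p_nil].
  rewrite (path_flow_out acyclicE) //.
  by case: (a.2) p_nil => [|y q] //= _; rewrite mem_head.
set S := \sum_(a <- L) a.1 in val_f.
have S_le : S / gamma <= 1 by rewrite ler_pdivrMr // mul1r -val_f.
exists ((1 - S / gamma, path_flow gamma s p0) ::
        [seq (a.1 / gamma, path_flow gamma s a.2) | a <- L]); split.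
- move=> b; rewrite inE => /predU1P[->|/mapP[a aL ->]] /=.
    by rewrite subr_ge0 S_le; case: (path_flow_single p0_st).
  have [a1_ge0 a_st _] := L_ok a aL.
  by rewrite divr_ge0 ?(ltW gamma_gt0) //; case: (path_flow_single a_st).
- by rewrite big_cons big_map -mulr_suml subrK.
move=> e eE; rewrite big_cons big_map f_eq //=.
rewrite [X in _ <= _ + X](eq_bigr (fun a => path_flow a.1 s a.2 e)) => [|a _].
  by rewrite lerDr mulr_ge0 ?subr_ge0 // /path_flow mulrn_wge0 // ltW.
by rewrite /path_flow mulrnAr divfK ?gt_eqF.
Qed.

Lemma dominating_single_path_mixture_choice :
  exists M : (V * V -> R) -> seq (R * (V * V -> R)),
    forall f, flow_le E C s t gamma f -> dominating_single_path_mixture f (M f).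
Proof.
have /choice [M MP] : forall f, exists M,
    flow_le E C s t gamma f -> dominating_single_path_mixture f M.
  move=> f; have [f_le|f_nle] := pselect (flow_le E C s t gamma f).
    by have [M fM] := dominating_single_path_mixture_exists f_le; exists M.
  by exists [::] => /f_nle.
by exists M.
Qed.
End SinglePathMixtures.

Unset Implicit Arguments.
Theorem proposition1 (V : finType) (R : realType) (E : {set V * V})
  (C : V * V -> R) (s t : V) (gamma : R)
  (hacyc : acyclic E)
  (hC : forall e, e \in E -> 0 <= C e)
  (hst : exists (x : V) (p : seq V), is_st_path E s t x p)
  (hgam0 : 0 < gamma)
  (hgamC : forall e, e \in E -> gamma <= C e)
  (w : seq (R * (V * V -> R)))
  (hw : interdiction E C s t gamma w) :
  exists w' : seq (R * (V * V -> R)),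
    interdiction E C s t gamma w' /\
    (forall a, a \in w' -> single_path_flow E C s t a.2) /\
    (forall (k : nat) (P : 'I_k -> V * seq V) (lam : 'I_k -> R),
       user_paths E C P lam ->
       Lambda_w E C P lam w <= Lambda_w E C P lam w').
Proof.
case: hw => w_ok w_sum1.
have [M MP] := dominating_single_path_mixture_choice hacyc hC hst hgam0 hgamC.
have {}MP a : a \in w -> dominating_single_path_mixture E C s t gamma a.2 (M a.2).
  by move=> /w_ok [_ /MP].
pose w' := [seq (a.1 * b.1, b.2) | a <- w, b <- M a.2].
exists w'; split; [split|split].
- move=> _ /allpairsPdep[a [b [aw bM ->]]] /=.
  have [/(_ b bM) [b1_ge0 b_fl _] _ _] := MP a aw.
  by rewrite mulr_ge0 //; case: (w_ok a aw).
- rewrite big_allpairs_dep -w_sum1; apply: eq_big_seq => a /MP [_ M_sum1 _].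
  by rewrite -mulr_sumr M_sum1 mulr1.
- by move=> _ /allpairsPdep[a [b [aw bM ->]]]; have [/(_ b bM) []] := MP a aw.
move=> k P lam [_ [lam_ge0 _]]; rewrite /Lambda_w big_allpairs_dep /=.
under [X in _ <= X]eq_bigr do under eq_bigr do rewrite -mulrA.
under [X in _ <= X]eq_bigr do rewrite -mulr_sumr.
apply: ler_wsum => [a /w_ok [] //|a /MP [M_ok M_sum1 a_le]].
apply: Lambda_f_convex => // b /M_ok [b1_ge0 [[b_cap _] _] _]; split=> // e eE.
by case/andP: (b_cap e eE).
Qed.
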